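(* Let $(X,\tau)$ be an extended locally convex space. Then there exists a locally convex topology $\tau_F$ on $X$ with the following properties: (a) $\tau_F\subseteq\tau$; (b) if $\sigma$ is any locally convex topology on $X$ with $\sigma\subseteq\tau$, then $\sigma\subseteq\tau_F$.
   Context: Let $X$ be a vector space over $\mathbb{R}$ or $\mathbb{C}$. An extended seminorm on $X$ is a map $\rho:X\to[0,\infty]$ with $\rho(\alpha x)=|\alpha|\rho(x)$ for all scalars $\alpha$ and $x\in X$ (with $0\cdot\infty=0$), and $\rho(x+y)\le\rho(x)+\rho(y)$. An extended locally convex space (elcs) is a pair $(X,\tau)$ where $\tau$ is the topology on $X$ induced by some family $\{\rho_i\}_{i\in I}$ of extended seminorms, i.e. a neighborhood base at each $x_0\in X$ is formed by the sets $\{x:\max_{i\in J}\rho_i(x-x_0)<\varepsilon\}$, $J\subseteq I$ finite, $\varepsilon>0$. (This is equivalent to the Salas–García definition: a group topology that is the supremum of a family of ''fundamental'' extended locally convex topologies, each making $X$ topologically the product of a locally convex subspace and a discrete subspace.) A locally convex topology on $X$ is a topology induced in the same way by a family of finite-valued seminorms (Hausdorffness not assumed). *)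

From HB Require Import structures.
From mathcomp Require Import all_boot all_order all_algebra.
From mathcomp Require Import complex.
From mathcomp Require Import all_classical all_reals.

Set Implicit Arguments. Unset Strict Implicit. Unset Printing Implicit Defensive.
Import Order.TTheory GRing.Theory Num.Theory.
Local Open Scope ring_scope.
Local Open Scope classical_set_scope.

Definition scal (R : realType) (b : bool) : numFieldType :=
  if b then (R : numFieldType) else ((R[i])%C : numFieldType).

Section ElcsDefs.
Context {K : numFieldType} {X : lmodType K}.

(* An extended seminorm X -> [0, +oo]; values are taken in \bar K and
   required to be nonnegative (for K = C these are exactly [0,+oo]). *)
Definition ext_seminorm (rho : X -> \bar K) : Prop :=
  (forall x, (0 <= rho x)%E) /\
  (forall (a : K) (x : X), rho (a *: x) = (`|a|%:E * rho x)%E) /\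
  (forall x y : X, (rho (x + y)%R <= rho x + rho y)%E).

Definition seminorm (p : X -> K) : Prop := ext_seminorm (fun x => (p x)%:E).

Definition induced_open {I : Type} (rho : I -> X -> \bar K) : set (set X) :=
  [set U | forall x0, U x0 -> exists (J : set I) (e : K),
      [/\ finite_set J, 0 < e &
          [set x | forall i, J i -> (rho i (x - x0)%R < e%:E)%E] `<=` U]].

Definition elc_topology (tau : set (set X)) : Prop :=
  exists (I : Type) (rho : I -> X -> \bar K),
    (forall i, ext_seminorm (rho i)) /\ tau = induced_open rho.

Definition lc_topology (sigma : set (set X)) : Prop :=
  exists (I : Type) (p : I -> X -> K),
    (forall i, seminorm (p i)) /\ sigma = induced_open (fun i x => (p i x)%:E).

End ElcsDefs.

From HB Require Import structures.
From mathcomp Require Import all_boot all_order all_algebra.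
From mathcomp Require Import complex.
From mathcomp Require Import all_classical all_reals.
Local Open Scope classical_set_scope.

Set Implicit Arguments. Unset Strict Implicit. Unset Printing Implicit Defensive.
Import Order.TTheory GRing.Theory Num.Theory.

(* tau_F is the topology generated by all tau-continuous seminorms.  It is
   coarser than tau because at each point the tau-neighbourhoods form a
   filter containing every ball of a tau-continuous seminorm, hence every
   finite intersection of such balls.  It is finer than any locally convex
   sigma coarser than tau because the seminorms generating sigma have
   sigma-open, hence tau-open, balls, so they are among the generators of
   tau_F. *)

Lemma filter_bigcap_finite (T I : Type) (F : set_system T) (J : set I)
    (B : I -> set T) :
  Filter F -> finite_set J -> (forall j, J j -> F (B j)) ->
  F (\bigcap_(j in J) B j).
Proof.
by move=> FF /(@finite_fsetP {classic I}) [D ->]; exact: (@filter_bigI T {classic I}).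
Qed.

Section InducedTopology.
Context {K : numFieldType} {X : lmodType K}.
Local Open Scope ring_scope.

Definition induced_nbhs {I : Type} (rho : I -> X -> \bar K) (x0 : X) :
    set_system X :=
  [set V | exists (J : set I) (e : K),
     [/\ finite_set J, 0 < e &
         [set x | forall i, J i -> (rho i (x - x0)%R < e%:E)%E] `<=` V]].

Lemma induced_openP {I : Type} (rho : I -> X -> \bar K) (U : set X) :
  induced_open rho U <-> forall x0, U x0 -> induced_nbhs rho x0 U.
Proof. by []. Qed.

Instance induced_nbhs_filter {I : Type} (rho : I -> X -> \bar K) (x0 : X) :
  Filter (induced_nbhs rho x0).
Proof.
constructor.
- by exists set0, 1; split.
- move=> V W [J1 [e1 [fJ1 e1gt0 sub1]]] [J2 [e2 [fJ2 e2gt0 sub2]]].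
  wlog le_e12 : V W J1 J2 e1 e2 fJ1 fJ2 e1gt0 e2gt0 sub1 sub2 / e1 <= e2.
    move=> wlog; have [?|/ltW ?] := real_leP (gtr0_real e1gt0) (gtr0_real e2gt0).
      exact: (wlog V W J1 J2 e1 e2).
    by rewrite setIC; exact: (wlog W V J2 J1 e2 e1).
  exists (J1 `|` J2), e1; split => //; first by rewrite finite_setU.
  move=> x ball_x; split; first by apply: sub1 => i J1i; apply: ball_x; left.
  apply: sub2 => i J2i; apply: lt_le_trans (ball_x i (or_intror J2i)) _.
  by rewrite lee_fin.
- move=> V W VW [J [e [fJ egt0 sub]]]; exists J, e; split => //.
  exact: subset_trans VW.
Qed.

Lemma induced_open_comp {I I' : Type} (rho : I -> X -> \bar K) (f : I' -> I) :
  induced_open (rho \o f) `<=` induced_open rho.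
Proof.
move=> U openU x0 /openU [J [e [fJ egt0 sub]]].
exists (f @` J), e; split => //; first exact: finite_image.
by move=> x ball_x; apply: sub => i Ji; apply: ball_x; exists i.
Qed.

Lemma ext_seminorm0 (rho : X -> \bar K) : ext_seminorm rho -> rho 0 = 0%E.
Proof. by move=> [_ [homo _]]; rewrite -(scale0r 0) homo normr0 mul0e. Qed.

Lemma induced_open_ball {I : Type} (rho : I -> X -> \bar K) (i : I) (x0 : X)
    (e : K) :
  (forall i, ext_seminorm (rho i)) ->
  induced_open rho [set x | (rho i (x - x0)%R < e%:E)%E].
Proof.
move=> rho_sn x1 /= ball_x1; have [rho_ge0 [_ rho_tri]] := rho_sn i.
have := rho_ge0 (x1 - x0); case E : (rho i (x1 - x0)) ball_x1 => [r| |] //= ball_x1 _.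
exists [set i], (e - r); split => //; first by rewrite subr_gt0 -lte_fin.
move=> x /(_ i erefl) ball_x /=.
have := rho_tri (x - x1) (x1 - x0); rewrite addrA subrK E => /le_lt_trans; apply.
case: (rho i (x - x1)) ball_x (rho_ge0 (x - x1)) => [s| |] //= ball_x _.
by rewrite -EFinD lte_fin -ltrBrDr.
Qed.

Definition cont_seminorm {I : Type} (rho : I -> X -> \bar K) (p : X -> K) :=
  seminorm p /\
  forall x0 e, induced_open rho [set x | ((p (x - x0)%R)%:E < e%:E)%E].

Definition finest_lc_topology {I : Type} (rho : I -> X -> \bar K) :
    set (set X) :=
  induced_open (fun (p : {p | cont_seminorm rho p}) (x : X) => (sval p x)%:E).

Section FinestLcTopology.
Context {I : Type} (rho : I -> X -> \bar K).

Lemma lc_finest_lc_topology : lc_topology (finest_lc_topology rho).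
Proof. by exists {p | cont_seminorm rho p}, sval; split => // -[p []]. Qed.

Lemma finest_lc_topology_sub : finest_lc_topology rho `<=` induced_open rho.
Proof.
move=> U /induced_openP openU; apply/induced_openP => x0 /openU [J [e [fJ egt0 sub]]].
apply: (filterS sub).
apply: (filter_bigcap_finite _ fJ) => -[p [sn_p open_p]] _.
apply: open_p; rewrite /= subrr.
by have /= -> := ext_seminorm0 sn_p.
Qed.

Lemma finest_lc_topology_max (sigma : set (set X)) :
  lc_topology sigma -> sigma `<=` induced_open rho ->
  sigma `<=` finest_lc_topology rho.
Proof.
move=> [I' [q [q_sn ->]]] sigma_sub.
have q_cont i : cont_seminorm rho (q i).
  by split=> // x0 e; apply: sigma_sub; exact: induced_open_ball.
exact: (@induced_open_comp _ _ _ (fun i => exist _ (q i) (q_cont i))).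
Qed.

End FinestLcTopology.
End InducedTopology.

Theorem theorem3p2 (R : realType) (b : bool) (X : lmodType (scal R b))
  (tau : set (set X)) :
  elc_topology tau ->
  exists tauF : set (set X),
    [/\ lc_topology tauF,
        tauF `<=` tau &
        forall sigma : set (set X), lc_topology sigma -> sigma `<=` tau -> sigma `<=` tauF].
Proof.
move=> [I [rho [_ ->]]]; exists (finest_lc_topology rho); split.
- exact: lc_finest_lc_topology.
- exact: finest_lc_topology_sub.
- exact: finest_lc_topology_max.
Qed.
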